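(* Let $\{\Theta_n\}_{n\ge0}$ be a translational family of lattice congruences, $\Theta_n$ a congruence on the weak order on $S_n$. Then the map $c:\mathbb{K}[Z^\Theta_\infty]\to\mathbb{K}[S_\infty]$ is an injective algebra homomorphism, i.e. $c(u\bullet_Z v)=c(u)\bullet_S c(v)$ for all $u\in Z_p$, $v\in Z_q$, so $c$ embeds $(\mathbb{K}[Z^\Theta_\infty],\bullet_Z)$ as a subalgebra of $(\mathbb{K}[S_\infty],\bullet_S)$.
   Context: $S_n$ is the set of permutations of $[n]=\{1,\dots,n\}$ in one-line notation $x=x_1\cdots x_n$, with the (right) weak order: $x\le y$ iff $\{(x_i,x_j):x_i<x_j,\ i>j\}\subseteq\{(y_i,y_j):y_i<y_j,\ i>j\}$; this is a lattice. For $u\in S_p$, $v\in S_q$, $u\times v\in S_{p+q}$ is $u_1\cdots u_p(p+v_1)\cdots(p+v_q)$. The standardization $\mathrm{st}(a_1,\dots,a_k)$ of a sequence of distinct integers is the $u\in S_k$ with $u_i<u_j\iff a_i<a_j$. For $x\in S_{p+q}$ let $x_{\bar p}:=u\times v$, where $u$ is the standardization of the subsequence of $x$ consisting of entries in $[1,p]$ and $v$ the standardization of the subsequence of entries in $[p+1,p+q]$. For a congruence $\Theta_n$ on $S_n$, $\pi_\downarrow x$ denotes the minimum of the class of $x$. Translational: for all $p,q\ge0$, $u,u'\in S_p$, $v,v'\in S_q$: $u\times v\equiv u'\times v'\pmod{\Theta_{p+q}}$ iff $u\equiv u'\pmod{\Theta_p}$ and $v\equiv v'\pmod{\Theta_q}$.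 $\mathbb{K}$ is a field; $\mathbb{K}[S_\infty]=\bigoplus_{n\ge0}\mathbb{K}[S_n]$ with the Malvenuto–Reutenauer product $u\bullet_S v=\sum_{x\in S_{p+q},\,x_{\bar p}=u\times v}x$ (the sum of all shuffles of $u$ and $v$). Let $Z_n=\{x\in S_n:\pi_\downarrow x=x\}$ (identified with $S_n/\Theta_n$), $\mathbb{K}[Z^\Theta_\infty]=\bigoplus_{n\ge0}\mathbb{K}[Z_n]$, with product $u\bullet_Z v=\sum_{x\in Z_{p+q},\,x_{\bar p}=u\times v}x$ for $u\in Z_p$, $v\in Z_q$. The linear map $c$ sends $x\in Z_n$ to the sum of all elements of the $\Theta_n$-class of $x$. *)

(* Permutations of [n] are encoded as 'S_n = {perm 'I_n},
   with values 0..n-1 instead of 1..n (x_i = x i). *)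
From HB Require Import structures.
From mathcomp Require Import all_boot all_order all_fingroup all_algebra.
Set Implicit Arguments. Unset Strict Implicit. Unset Printing Implicit Defensive.
Import GRing.Theory.
Local Open Scope ring_scope.

(* (a,b) is an inversion (as a pair of values) of x: a < b and the value a
   appears at a later position than b, i.e. (x_i, x_j) with x_i<x_j, i>j. *)
Definition inv_pair n (x : 'S_n) (a b : 'I_n) : bool :=
  ((a < b)%N && (x^-1%g b < x^-1%g a)%N).

Definition weak_le n (x y : 'S_n) : bool :=
  [forall a, forall b, inv_pair x a b ==> inv_pair y a b].

Definition is_meet n (m x y : 'S_n) : bool :=
  [&& weak_le m x, weak_le m y &
      [forall z, (weak_le z x && weak_le z y) ==> weak_le z m]].

Definition is_join n (j x y : 'S_n) : bool :=
  [&& weak_le x j, weak_le y j &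
      [forall z, (weak_le x z && weak_le y z) ==> weak_le j z]].

(* A lattice congruence of the weak order: an equivalence relation compatible
   with meets and joins (meets/joins are stated relationally; they exist and
   are unique since the weak order is a lattice). *)
Definition lattice_congruence n (th : rel 'S_n) : Prop :=
  [/\ (forall x, th x x),
      (forall x y, th x y -> th y x),
      (forall x y z, th x y -> th y z -> th x z),
      (forall x y z m m', th x y -> is_meet m x z -> is_meet m' y z -> th m m')
    & (forall x y z j j', th x y -> is_join j x z -> is_join j' y z -> th j j')].

Definition pprod_fun p q (u : 'S_p) (v : 'S_q) (i : 'I_(p + q)) : 'I_(p + q) :=
  unsplit (match split i with inl j => inl (u j) | inr k => inr (v k) end).

Lemma pprod_fun_inj p q (u : 'S_p) (v : 'S_q) : injective (pprod_fun u v).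
Proof.
move=> i j /(can_inj (@unsplitK p q)) H; apply: (can_inj (@splitK p q)).
move: H; case: (split i) => a; case: (split j) => b //= [] /perm_inj -> //.
Qed.

(* u x v = u_1 ... u_p (p+v_1) ... (p+v_q) *)
Definition pprod p q (u : 'S_p) (v : 'S_q) : 'S_(p + q) :=
  perm (@pprod_fun_inj p q u v).

Definition is_st k (s : seq nat) (u : 'S_k) : bool :=
  (size s == k) &&
  [forall i : 'I_k, forall j : 'I_k,
     ((u i < u j)%N == (nth 0%N s i < nth 0%N s j)%N)].

(* subsequence of entries of x lying in [1,p] (here: values < p), and
   in [p+1,p+q] (here: values >= p) *)
Definition low_seq p q (x : 'S_(p + q)) : seq nat :=
  [seq val (x i) | i <- enum 'I_(p + q) & (val (x i) < p)%N].
Definition high_seq p q (x : 'S_(p + q)) : seq nat :=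
  [seq val (x i) | i <- enum 'I_(p + q) & (p <= val (x i))%N].

(* xbar_eq x u v  <=>  x_{\bar p} = u x v,
   where x_{\bar p} := st(low part) x st(high part). *)
Definition xbar_eq p q (x : 'S_(p + q)) (u : 'S_p) (v : 'S_q) : bool :=
  [exists u' : 'S_p, exists v' : 'S_q,
     [&& is_st (low_seq x) u', is_st (high_seq x) v' & pprod u' v' == pprod u v]].

Definition translational (Th : forall n, rel 'S_n) : Prop :=
  forall p q (u u' : 'S_p) (v v' : 'S_q),
    Th (p + q)%N (pprod u v) (pprod u' v') <-> (Th p u u' /\ Th q v v').

Definition Zset (Th : forall n, rel 'S_n) n : {set 'S_n} :=
  [set x | [forall y, Th n y x ==> weak_le x y]].

(* K[S_n] is represented by {ffun 'S_n -> K} (coefficient functions);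
   K[Z_n] by coefficient functions supported on Zset Th n. *)

Definition basis (K : fieldType) n (x : 'S_n) : {ffun 'S_n -> K} := [ffun y => (y == x)%:R].

(* Malvenuto–Reutenauer product, bilinear extension of
   u .S v = sum_{x, x_{\bar p} = u x v} x *)
Definition mulS (K : fieldType) p q (f : {ffun 'S_p -> K}) (g : {ffun 'S_q -> K})
  : {ffun 'S_(p + q) -> K} :=
  [ffun x => \sum_(u : 'S_p) \sum_(v : 'S_q) f u * g v * (xbar_eq x u v)%:R].

Definition mulZ (K : fieldType) (Th : forall n, rel 'S_n) p q (u : 'S_p) (v : 'S_q)
  : {ffun 'S_(p + q) -> K} :=
  [ffun x => ((x \in Zset Th (p + q)) && xbar_eq x u v)%:R].

(* c : K[Z_n] -> K[S_n], linear, sending x in Z_n to the sum of its class *)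
Definition cmap (K : fieldType) (Th : forall n, rel 'S_n) n (f : {ffun 'S_n -> K})
  : {ffun 'S_n -> K} :=
  [ffun y => \sum_(x in Zset Th n) f x * (Th n y x)%:R].

(* Write xbar x for x_{\bar p}: it keeps exactly the inversions of x between
   entries of the same block.  By translationality, the coefficient of x in
   c(u) .S c(v) is 1 iff xbar x is congruent to u x v.  The coefficient of x in
   c(u .Z v) is that of the minimum m of the class of x, which is 1 iff
   xbar m = u x v.  Since m <= x, xbar m and xbar x are the meets of m and of x
   with xbar x, hence congruent.  Moreover xbar m and u x v are class minima,
   and congruent class minima coincide.  Unit and injectivity hold because
   every class has exactly one minimum. *)

From mathcomp Require Import all_boot all_order all_fingroup all_algebra.
From mathcomp Require Import zify.
Import GRing.Theory.

Set Implicit Arguments.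
Unset Strict Implicit.
Unset Printing Implicit Defensive.

Section PermutationsFromOrders.
Variable n : nat.

Lemma card_ord_ltn m : m <= n -> #|[set c : 'I_n | c < m]| = m.
Proof.
move=> le_mn; have -> : [set c : 'I_n | c < m] = widen_ord le_mn @: 'I_m.
  apply/setP => c; rewrite inE; apply/idP/imsetP => [lt_cm|[j _ ->]] //=.
  by exists (Ordinal lt_cm) => //; apply: val_inj.
by rewrite card_imset ?card_ord // => i j /(congr1 val) /= /val_inj.
Qed.

Lemma card_perm_ltn (s : 'S_n) i : #|[set j | s j < s i]| = s i.
Proof.
have -> : [set j | s j < s i] = s @^-1: [set c : 'I_n | c < s i].
  by apply/setP => j; rewrite !inE.
by rewrite card_preimset ?card_ord_ltn //; [apply: ltnW | apply: perm_inj].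
Qed.

Lemma eq_perm_ltn (s t : 'S_n) :
  (forall i j, (s i < s j) = (t i < t j)) -> s = t.
Proof.
move=> eq_lt; apply/permP => i; apply: val_inj.
rewrite /= -card_perm_ltn -[RHS]card_perm_ltn.
by apply: eq_card => j; rewrite !inE eq_lt.
Qed.

Lemma perm_ltn_swap (s : 'S_n) a b : a != b -> (s a < s b) = ~~ (s b < s a).
Proof.
move=> neq_ab; have neq_sab : s a != s b by rewrite (inj_eq perm_inj).
by rewrite -leqNgt ltn_neqAle neq_sab.
Qed.

(* Ranking by the number of smaller elements realises any strict total order. *)
Lemma exists_perm_inv_pair (lt : rel 'I_n) :
  transitive lt -> irreflexive lt -> (forall a b, a != b -> lt a b || lt b a) ->
  exists x : 'S_n, forall a b, inv_pair x a b = (a < b) && lt b a.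
Proof.
move=> lt_trans lt_irr lt_total.
pose rank i := #|[set j | lt j i]|.
have rank_mono i j : lt i j -> rank i < rank j.
  move=> lt_ij; apply: proper_card; apply/properP; split.
    by apply/subsetP => c; rewrite !inE => /lt_trans; apply.
  by exists i; rewrite !inE ?lt_irr.
have rank_lt i : rank i < n.
  rewrite -[n]card_ord -cardsT; apply: proper_card; apply/properP; split.
    exact: subsetT.
  by exists i; rewrite !inE ?lt_irr.
have rank_inj : injective (fun i => Ordinal (rank_lt i)).
  move=> i j /(congr1 val) /= eq_rank; apply/eqP/negP => /negP /lt_total.
  by case/orP => /rank_mono; rewrite eq_rank ltnn.
exists (perm rank_inj)^-1%g => a b; rewrite /inv_pair invgK !permE /=.
congr andb; apply/idP/idP => [lt_rank|/rank_mono //].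
have [eq_ab|neq_ab] := eqVneq a b; first by rewrite eq_ab ltnn in lt_rank.
case/orP: (lt_total _ _ neq_ab) => // /rank_mono.
by rewrite ltnNge (ltnW lt_rank).
Qed.

End PermutationsFromOrders.

Section WeakOrder.
Variable n : nat.
Implicit Types x y z m : 'S_n.

Lemma weak_leP x y :
  reflect (forall a b, inv_pair x a b -> inv_pair y a b) (weak_le x y).
Proof.
apply: (iffP forallP) => [le_xy a b|le_xy a].
  by move/forallP: (le_xy a) => /(_ b) /implyP.
by apply/forallP => b; apply/implyP/le_xy.
Qed.

Lemma weak_le_refl x : weak_le x x.
Proof. by apply/weak_leP. Qed.

Lemma inv_pair_inj x y : (forall a b, inv_pair x a b = inv_pair y a b) -> x = y.
Proof.
move=> eq_inv; rewrite -[x]invgK -[y]invgK; congr (_^-1)%g.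
apply: eq_perm_ltn => i j; case: (ltngtP i j) => [lt_ij|lt_ji|/val_inj ->].
- have neq_ij : i != j by rewrite -val_eqE neq_ltn lt_ij.
  rewrite perm_ltn_swap // [RHS]perm_ltn_swap //.
  by have := eq_inv i j; rewrite /inv_pair lt_ij /= => ->.
- by have := eq_inv j i; rewrite /inv_pair lt_ji.
- by rewrite !ltnn.
Qed.

Lemma weak_le_anti x y : weak_le x y -> weak_le y x -> x = y.
Proof.
move=> /weak_leP le_xy /weak_leP le_yx; apply: inv_pair_inj => a b.
by apply/idP/idP => [/le_xy|/le_yx].
Qed.

Definition inv_set x := [set ab | inv_pair x ab.1 ab.2].

Lemma eq_weak_le_card x y : weak_le x y -> #|inv_set y| <= #|inv_set x| -> x = y.
Proof.
move=> le_xy le_card; apply: weak_le_anti => //; apply/weak_leP => a b inv_y.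
have sub_inv : inv_set x \subset inv_set y.
  by apply/subsetP => ab; rewrite !inE; move/weak_leP: le_xy; apply.
have /eqP/setP/(_ (a, b)) : inv_set x == inv_set y by rewrite eqEcard sub_inv le_card.
by rewrite !inE inv_y.
Qed.

Lemma is_meetC m x y : is_meet m x y = is_meet m y x.
Proof.
rewrite /is_meet andbA [weak_le m x && _]andbC -andbA; do 2 congr andb.
by apply: eq_forallb => z; rewrite andbC.
Qed.

Lemma weak_le_is_meet x y : weak_le x y -> is_meet x x y.
Proof.
move=> le_xy; rewrite /is_meet weak_le_refl le_xy.
by apply/forallP => z; apply/implyP => /andP [].
Qed.

Definition before x (a b : 'I_n) := (x^-1)%g a < (x^-1)%g b.

Lemma inv_pairE x (a b : 'I_n) : a < b -> inv_pair x a b = ~~ before x a b.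
Proof.
by move=> lt_ab; rewrite /inv_pair /before lt_ab perm_ltn_swap // -val_eqE neq_ltn lt_ab orbT.
Qed.

Lemma before_split x (a b c : 'I_n) : before x a b -> before x a c || before x c b.
Proof. by rewrite /before => lt_ab; case: ltnP => //= /leq_ltn_trans; apply. Qed.

Section Meet.
Variables x y : 'S_n.

(* The non-inversions of the meet are the transitive closure of the
   non-inversions of x and of y. *)
Definition meet_edge : rel 'I_n := fun a b => (a < b) && (before x a b || before y a b).
Local Notation meet_conn := (connect meet_edge).

Lemma meet_conn_split (a b c : 'I_n) :
  a < c -> c < b -> meet_conn a b -> meet_conn a c || meet_conn c b.
Proof.
move=> lt_ac lt_cb /connectP [s]; elim: s a lt_ac => [|d s IH] a lt_ac /=.
  by move=> _ eq_ab; move: (ltn_trans lt_ac lt_cb); rewrite eq_ab ltnn.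
move=> /andP [edge_ad path_db] last_b.
have conn_db : meet_conn d b by apply/connectP; exists s.
have conn_ad : meet_conn a d by apply: connect1.
case: (ltngtP c d) => [lt_cd|lt_dc|/val_inj ->]; last by rewrite conn_ad.
- move: edge_ad => /andP [_ before_ad].
  have : meet_edge a c || meet_edge c d.
    rewrite /meet_edge lt_ac lt_cd /=.
    by case/orP: before_ad => /(before_split c) /orP [] ->; rewrite ?orbT.
  case/orP => [edge_ac|edge_cd]; first by rewrite connect1.
  by rewrite (connect_trans (connect1 edge_cd) conn_db) orbT.
- case/orP: (IH d lt_dc path_db last_b) => [conn_dc|->]; last by rewrite orbT.
  by rewrite (connect_trans conn_ad conn_dc).
Qed.

Definition meet_lt (a b : 'I_n) :=
  if a < b then meet_conn a b else if b < a then ~~ meet_conn b a else false.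

Lemma meet_lt_trans : transitive meet_lt.
Proof.
move=> b a c; rewrite /meet_lt.
have trans := @connect_trans _ meet_edge.
case: (ltngtP a b) => ab; case: (ltngtP b c) => bc; case: (ltngtP a c) => ac //;
  rewrite ?(val_inj ab) ?(val_inj bc) ?(val_inj ac) ?ltnn //; try lia.
- exact: trans.
- by move=> R_ab R_bc; case/orP: (meet_conn_split ac bc R_ab) => // R_ac; rewrite R_ac in R_bc.
- by move=> R_ab nR_cb; apply/negP => R_ca; rewrite (trans _ _ _ R_ca R_ab) in nR_cb.
- by move=> nR_ba R_bc; case/orP: (meet_conn_split ab ac R_bc) => // R_ba; rewrite R_ba in nR_ba.
- by move=> nR_ba R_bc; apply/negP => R_ca; rewrite (trans _ _ _ R_bc R_ca) in nR_ba.
- move=> nR_ba nR_cb; apply/negP => R_ca.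
  by case/orP: (meet_conn_split bc ab R_ca) => R; [rewrite R in nR_cb | rewrite R in nR_ba].
Qed.

Lemma meet_lt_irr : irreflexive meet_lt.
Proof. by move=> a; rewrite /meet_lt ltnn. Qed.

Lemma meet_lt_total (a b : 'I_n) : a != b -> meet_lt a b || meet_lt b a.
Proof.
rewrite neq_ltn /meet_lt => /orP [] lt; rewrite lt ltnNge (ltnW lt) /=;
  by case: meet_conn.
Qed.

Lemma meet_exists : exists m, is_meet m x y.
Proof.
have [m inv_m] := exists_perm_inv_pair meet_lt_trans meet_lt_irr meet_lt_total.
have {}inv_m a b : inv_pair m a b = (a < b) && ~~ meet_conn a b.
  by rewrite inv_m /meet_lt; case: ltngtP => //= /val_inj ->; rewrite ltnn.
have le_m w : (forall a b : 'I_n, a < b -> before w a b -> meet_edge a b) -> weak_le m w.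
  move=> w_edge; apply/weak_leP => a b; rewrite inv_m => /andP [lt_ab nconn].
  rewrite inv_pairE //; apply: contraNN nconn => before_ab.
  exact/connect1/w_edge.
exists m; apply/and3P; split.
- by apply: le_m => a b lt_ab before_ab; rewrite /meet_edge lt_ab before_ab.
- by apply: le_m => a b lt_ab before_ab; rewrite /meet_edge lt_ab before_ab orbT.
apply/forallP => z; apply/implyP => /andP [/weak_leP le_zx /weak_leP le_zy].
have conn_before c d : meet_conn c d -> (z^-1)%g c <= (z^-1)%g d.
  move=> /connectP [s]; elim: s c => [|e s IH] c /=; first by move=> _ ->.
  move=> /andP [/andP [lt_ce before_ce] path_s] last_d.
  apply: leq_trans (IH _ path_s last_d); rewrite leqNgt; apply/negP => lt_z.
  have inv_z : inv_pair z c e by rewrite /inv_pair lt_ce.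
  move: (le_zx _ _ inv_z) (le_zy _ _ inv_z); rewrite !inv_pairE //.
  by case/orP: before_ce => ->.
apply/weak_leP => a b inv_z; rewrite inv_m.
move: (inv_z) => /andP [-> lt_z] /=; apply/negP => /conn_before.
by rewrite leqNgt lt_z.
Qed.

End Meet.
End WeakOrder.

Section LatticeCongruence.
Variables (n : nat) (th : rel 'S_n).
Hypothesis th_congr : lattice_congruence th.
Implicit Types x y z m : 'S_n.

Lemma lcongr_refl x : th x x.
Proof. by case: th_congr. Qed.

Lemma lcongr_sym x y : th x y -> th y x.
Proof. by case: th_congr => _ sym _ _ _; apply: sym. Qed.

Lemma lcongr_trans y x z : th x y -> th y z -> th x z.
Proof. by case: th_congr => _ _ trans _ _; apply: trans. Qed.

Lemma lcongr_meet x y z m m' : th x y -> is_meet m x z -> is_meet m' y z -> th m m'.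
Proof. by case: th_congr => _ _ _ meet _; apply: meet. Qed.

Lemma lcongr_join x y z j j' : th x y -> is_join j x z -> is_join j' y z -> th j j'.
Proof. by case: th_congr => _ _ _ _ join; apply: join. Qed.

Definition class_min x := forall y, th y x -> weak_le x y.

Lemma class_min_uniq x y : class_min x -> class_min y -> th x y -> x = y.
Proof.
move=> min_x min_y th_xy.
by apply: weak_le_anti; [apply/min_x/lcongr_sym | apply: min_y].
Qed.

(* An element of the class with fewest inversions is congruent to its meet with
   any element of the class, hence equal to that meet. *)
Lemma exists_class_min y : exists m, [/\ class_min m, th y m & weak_le m y].
Proof.
have [m th_ym min_m] := @arg_minnP _ y (th y) (fun x => #|inv_set x|) (lcongr_refl y).
have cmin_m : class_min m.
  move=> z th_zm; have [w meet_w] := meet_exists m z.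
  have th_wm : th w m.
    apply: (lcongr_meet th_zm _ (weak_le_is_meet (weak_le_refl m))).
    by rewrite is_meetC.
  have le_wm : weak_le w m by case/and3P: meet_w.
  have <- : w = m.
    apply: eq_weak_le_card le_wm _; apply: min_m.
    exact: lcongr_trans th_ym (lcongr_sym th_wm).
  by case/and3P: meet_w.
by exists m; split; last apply: cmin_m.
Qed.

End LatticeCongruence.

Lemma is_st_uniq k (s : seq nat) (u u' : 'S_k) : is_st s u -> is_st s u' -> u = u'.
Proof.
move=> /andP [_ /forallP st_u] /andP [_ /forallP st_u']; apply: eq_perm_ltn => i j.
by move/forallP: (st_u i) => /(_ j) /eqP ->; move/forallP: (st_u' i) => /(_ j) /eqP ->.
Qed.

Lemma index_sorted_ord n (s : seq 'I_n) (i j : 'I_n) :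
  sorted (fun a b : 'I_n => a < b) s -> i \in s -> j \in s ->
  (index i s < index j s) = (i < j).
Proof.
move=> sorted_s i_s j_s.
have lt_trans : transitive (fun a b : 'I_n => a < b) by move=> b a c; apply: ltn_trans.
apply/idP/idP; first exact: (sorted_ltn_index lt_trans sorted_s i j i_s j_s).
case: (ltngtP (index i s) (index j s)) => // [lt_ji|eq_ij] lt_ij.
  by have := sorted_ltn_index lt_trans sorted_s j i j_s i_s lt_ji; rewrite ltnNge ltnW.
by move/(congr1 (nth i s)): eq_ij; rewrite !nth_index // => eq_ij; rewrite eq_ij ltnn in lt_ij.
Qed.

Section BlockStandardization.
Variables (n off k : nat) (x : 'S_n).
Hypothesis block_le : off + k <= n.

Definition in_block (c : 'I_n) := off <= c < off + k.
Definition block_seq := [seq val (x i) | i <- enum 'I_n & in_block (x i)].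

Lemma mem_block_seq c : (c \in block_seq) = (off <= c < off + k).
Proof.
apply/mapP/idP => [[i]|c_in]; first by rewrite mem_filter => /andP [in_i _] ->.
have lt_cn : c < n by case/andP: c_in => _ /leq_trans; apply.
exists ((x^-1)%g (Ordinal lt_cn)); last by rewrite permKV.
by rewrite mem_filter mem_enum permKV andbT.
Qed.

Lemma uniq_block_seq : uniq block_seq.
Proof.
rewrite map_inj_uniq ?filter_uniq -?enumT ?enum_uniq //.
by move=> i j /val_inj /perm_inj.
Qed.

Lemma size_block_seq : size block_seq = k.
Proof.
have /perm_size -> : perm_eq block_seq (iota off k).
  by apply: uniq_perm; rewrite ?uniq_block_seq ?iota_uniq // => c; rewrite mem_block_seq mem_iota.
by rewrite size_iota.
Qed.

Lemma nth_block_seq i : i < k -> off <= nth 0 block_seq i < off + k.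
Proof. by move=> lt_ik; rewrite -mem_block_seq mem_nth // size_block_seq. Qed.

Lemma index_block_seq (c d : 'I_n) : in_block c -> in_block d ->
  (index (c : nat) block_seq < index (d : nat) block_seq) = ((x^-1)%g c < (x^-1)%g d).
Proof.
move=> c_in d_in.
have val_x_inj : injective (fun i => val (x i)) by move=> i j /val_inj /perm_inj.
rewrite -{1}(permKV x c) -{1}(permKV x d) /block_seq !(index_map val_x_inj).
apply: index_sorted_ord; rewrite ?mem_filter ?permKV ?c_in ?d_in -?enumT ?mem_enum //.
apply: sorted_filter; first by move=> b a e; apply: ltn_trans.
by have := iota_ltn_sorted 0 n; rewrite -val_enum_ord sorted_map; apply: sub_sorted.
Qed.

Lemma exists_st_block_seq :
  exists2 u : 'S_k, is_st block_seq u & forall i, off + u i = nth 0 block_seq i.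
Proof.
have lt_k (i : 'I_k) : nth 0 block_seq i - off < k.
  by case/andP: (nth_block_seq (ltn_ord i)); lia.
have shift_inj : injective (fun i => Ordinal (lt_k i)).
  move=> i j /(congr1 val) /= eq_ij; apply: val_inj; apply/eqP.
  rewrite -(nth_uniq 0 _ _ uniq_block_seq) /= ?size_block_seq //; apply/eqP.
  by move: (nth_block_seq (ltn_ord i)) (nth_block_seq (ltn_ord j)) eq_ij; lia.
exists (perm shift_inj) => [|i]; last first.
  by rewrite permE /=; case/andP: (nth_block_seq (ltn_ord i)); lia.
rewrite /is_st size_block_seq eqxx; apply/forallP => i; apply/forallP => j.
rewrite !permE /=; move: (nth_block_seq (ltn_ord i)) (nth_block_seq (ltn_ord j)).
by move=> /andP [? ?] /andP [? ?]; apply/eqP; apply/idP/idP; lia.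
Qed.

Lemma st_block_seq_before (u : 'S_k) : is_st block_seq u ->
  forall (a b : 'I_k) (a' b' : 'I_n), a' = off + a :> nat -> b' = off + b :> nat ->
  ((u^-1)%g a < (u^-1)%g b) = ((x^-1)%g a' < (x^-1)%g b').
Proof.
move=> st_u a b a' b' eq_a eq_b.
have [u' st_u' u'E] := exists_st_block_seq.
have index_u (c : 'I_k) (c' : 'I_n) :
    c' = off + c :> nat -> index (c' : nat) block_seq = (u^-1)%g c.
  move=> eq_c; rewrite eq_c (is_st_uniq st_u st_u') -[in off + c](permKV u' c) u'E.
  by rewrite index_uniq ?uniq_block_seq ?size_block_seq.
rewrite -(index_u a a') // -(index_u b b') //.
by apply: index_block_seq; rewrite /in_block ?eq_a ?eq_b leq_addr ltn_add2l ltn_ord.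
Qed.

End BlockStandardization.

Section BlockProduct.
Variables p q : nat.
Implicit Types (u : 'S_p) (v : 'S_q) (x y : 'S_(p + q)).

Lemma pprod_lshift u v i : pprod u v (lshift q i) = lshift q (u i).
Proof. by rewrite permE /pprod_fun -[lshift q i]/(unsplit (inl i)) unsplitK. Qed.

Lemma pprod_rshift u v i : pprod u v (rshift p i) = rshift p (v i).
Proof. by rewrite permE /pprod_fun -[rshift p i]/(unsplit (inr i)) unsplitK. Qed.

Lemma pprodV_lshift u v i : ((pprod u v)^-1)%g (lshift q i) = lshift q ((u^-1)%g i).
Proof. by apply: (@perm_inj _ (pprod u v)); rewrite permKV pprod_lshift permKV. Qed.

Lemma pprodV_rshift u v i : ((pprod u v)^-1)%g (rshift p i) = rshift p ((v^-1)%g i).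
Proof. by apply: (@perm_inj _ (pprod u v)); rewrite permKV pprod_rshift permKV. Qed.

Lemma inv_pprod_ll u v a b :
  inv_pair (pprod u v) (lshift q a) (lshift q b) = inv_pair u a b.
Proof. by rewrite /inv_pair !pprodV_lshift. Qed.

Lemma inv_pprod_rr u v a b :
  inv_pair (pprod u v) (rshift p a) (rshift p b) = inv_pair v a b.
Proof. by rewrite /inv_pair !pprodV_rshift /= !ltn_add2l. Qed.

Lemma inv_pprod_lr u v a b : inv_pair (pprod u v) (lshift q a) (rshift p b) = false.
Proof.
rewrite /inv_pair pprodV_lshift pprodV_rshift /= andbC.
by rewrite ltnNge (leq_trans (ltnW (ltn_ord _)) (leq_addr _ _)).
Qed.

Lemma inv_pprod_rl u v a b : inv_pair (pprod u v) (rshift p a) (lshift q b) = false.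
Proof. by rewrite /inv_pair /= ltnNge (leq_trans (ltnW (ltn_ord _)) (leq_addr _ _)). Qed.

Lemma eq_pprod u u' v v' : (pprod u v == pprod u' v') = (u == u') && (v == v').
Proof.
apply/eqP/andP => [eq_uv|[/eqP -> /eqP ->] //]; split; apply/eqP/permP => i.
  by move/(congr1 (fun x => val (x (lshift q i)))): eq_uv; rewrite !pprod_lshift /= => /val_inj.
move/(congr1 (fun x => val (x (rshift p i)))): eq_uv.
by rewrite !pprod_rshift /= => /addnI /val_inj.
Qed.

Definition same_block (a b : 'I_(p + q)) := (a < p) == (b < p).

Lemma inv_pprod_same_block u v a b : inv_pair (pprod u v) a b -> same_block a b.
Proof.
rewrite /same_block; case: (split_ordP a) => a' ->; case: (split_ordP b) => b' ->;
  by rewrite ?inv_pprod_lr ?inv_pprod_rl //= ltn_ord ?ltnNge ?leq_addr.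
Qed.

Lemma pprod_le u u' v v' :
  weak_le u u' -> weak_le v v' -> weak_le (pprod u v) (pprod u' v').
Proof.
move=> /weak_leP le_u /weak_leP le_v; apply/weak_leP => a b.
case: (split_ordP a) => a' ->; case: (split_ordP b) => b' ->;
  rewrite ?inv_pprod_ll ?inv_pprod_rr ?inv_pprod_lr ?inv_pprod_rl //; [apply: le_u | apply: le_v].
Qed.

Lemma low_seqE x : low_seq x = block_seq 0 p x.
Proof. by congr map; apply: eq_filter => i; rewrite /in_block add0n. Qed.

Lemma high_seqE x : high_seq x = block_seq p q x.
Proof. by congr map; apply: eq_filter => i; rewrite /in_block ltn_ord andbT. Qed.

Definition std_low x : 'S_p := odflt 1%g [pick u | is_st (low_seq x) u].
Definition std_high x : 'S_q := odflt 1%g [pick v | is_st (high_seq x) v].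

Lemma std_low_st x : is_st (low_seq x) (std_low x).
Proof.
rewrite /std_low; case: pickP => [//|no_st] /=.
have [u st_u _] := @exists_st_block_seq (p + q) 0 p x (leq_addr q p).
by have := no_st u; rewrite low_seqE st_u.
Qed.

Lemma std_high_st x : is_st (high_seq x) (std_high x).
Proof.
rewrite /std_high; case: pickP => [//|no_st] /=.
have [v st_v _] := @exists_st_block_seq (p + q) p q x (leqnn _).
by have := no_st v; rewrite high_seqE st_v.
Qed.

Lemma xbar_eqE x u v : xbar_eq x u v = (u == std_low x) && (v == std_high x).
Proof.
apply/existsP/andP => [[u' /existsP [v' /and3P [st_u' st_v']]]|[/eqP -> /eqP ->]].
  rewrite eq_pprod => /andP [/eqP <- /eqP <-].
  by rewrite (is_st_uniq st_u' (std_low_st x)) (is_st_uniq st_v' (std_high_st x)).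
by exists (std_low x); apply/existsP; exists (std_high x); rewrite std_low_st std_high_st eqxx.
Qed.

Lemma inv_std_low x a b : inv_pair (std_low x) a b = inv_pair x (lshift q a) (lshift q b).
Proof.
rewrite /inv_pair /=; congr andb.
apply: (@st_block_seq_before (p + q) 0 p x (leq_addr q p)); rewrite -?low_seqE //.
exact: std_low_st.
Qed.

Lemma inv_std_high x a b : inv_pair (std_high x) a b = inv_pair x (rshift p a) (rshift p b).
Proof.
rewrite /inv_pair /= ltn_add2l; congr andb.
by apply: (@st_block_seq_before (p + q) p q x (leqnn _)); rewrite -?high_seqE ?std_high_st.
Qed.

Definition xbar x := pprod (std_low x) (std_high x).

Lemma inv_xbar x a b : inv_pair (xbar x) a b = same_block a b && inv_pair x a b.
Proof.
rewrite /xbar /same_block; case: (split_ordP a) => a' ->; case: (split_ordP b) => b' ->;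
  rewrite ?inv_pprod_ll ?inv_pprod_rr ?inv_pprod_lr ?inv_pprod_rl ?inv_std_low ?inv_std_high
          /= ?ltn_ord ?ltnNge ?leq_addr //.
Qed.

Lemma xbar_le x : weak_le (xbar x) x.
Proof. by apply/weak_leP => a b; rewrite inv_xbar => /andP []. Qed.

Lemma xbar_id x : (forall a b, inv_pair x a b -> same_block a b) -> xbar x = x.
Proof.
move=> x_same; apply: inv_pair_inj => a b; rewrite inv_xbar.
by case inv_x: (inv_pair x a b); rewrite ?andbF ?x_same.
Qed.

Lemma xbar_is_meet x y : weak_le x y -> is_meet (xbar x) x (xbar y).
Proof.
move=> /weak_leP le_xy; apply/and3P; split; first exact: xbar_le.
  by apply/weak_leP => a b; rewrite !inv_xbar => /andP [-> /le_xy].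
apply/forallP => z; apply/implyP => /andP [/weak_leP le_zx /weak_leP le_zy].
apply/weak_leP => a b inv_z; rewrite inv_xbar le_zx // andbT.
by move: (le_zy _ _ inv_z); rewrite inv_xbar => /andP [].
Qed.

Definition high_first x t := forall a b,
  inv_pair t a b = (same_block a b && inv_pair x a b) || (a < b) && ~~ same_block a b.

Lemma exists_high_first x : exists t, high_first x t.
Proof.
pose lt a b := if same_block a b then (x^-1)%g a < (x^-1)%g b else p <= a.
have lt_trans : transitive lt.
  move=> b a c; rewrite /lt /same_block.
  by case: (ltnP a p); case: (ltnP b p); case: (ltnP c p) => //= _ _ _; apply: ltn_trans.
have lt_irr : irreflexive lt by move=> a; rewrite /lt /same_block eqxx ltnn.
have lt_total a b : a != b -> lt a b || lt b a.
  move=> neq_ab; rewrite /lt /same_block eq_sym.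
  by case: (ltnP a p); case: (ltnP b p) => //= _ _; rewrite perm_ltn_swap // orNb.
have [t inv_t] := exists_perm_inv_pair lt_trans lt_irr lt_total.
exists t => a b; rewrite inv_t /lt /same_block eq_sym /inv_pair.
case: (ltnP a p) => lt_a; case: (ltnP b p) => lt_b //=; rewrite ?andbT ?andbF ?orbF //.
by apply/esym/negbTE; rewrite -leqNgt ltnW // (leq_trans lt_b lt_a).
Qed.

Lemma high_first_is_join x t t0 : high_first x t -> high_first 1%g t0 -> is_join t x t0.
Proof.
move=> inv_t inv_t0.
have {}inv_t0 a b : inv_pair t0 a b = (a < b) && ~~ same_block a b.
  by rewrite inv_t0 /inv_pair invg1 !perm1; case: ltngtP; rewrite ?andbF.
apply/and3P; split.
- apply/weak_leP => a b inv_x; rewrite inv_t inv_x andbT.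
  by case: (same_block a b); rewrite //= andbT; case/andP: inv_x.
- by apply/weak_leP => a b; rewrite inv_t0 inv_t => ->; rewrite orbT.
apply/forallP => z; apply/implyP => /andP [/weak_leP le_xz /weak_leP le_t0z].
apply/weak_leP => a b; rewrite inv_t => /orP [/andP [_ /le_xz] //|cross].
by apply: le_t0z; rewrite inv_t0.
Qed.

End BlockProduct.

Section TranslationalFamily.
Variable Th : forall n, rel 'S_n.
Arguments Th : clear implicits.
Hypothesis Th_congr : forall n, lattice_congruence (Th n).
Hypothesis Th_transl : translational Th.
Variables p q : nat.
Implicit Types (u : 'S_p) (v : 'S_q) (x y m : 'S_(p + q)).

Lemma pprod_class_min u v :
  class_min (Th p) u -> class_min (Th q) v -> class_min (Th (p + q)) (pprod u v).
Proof.
move=> min_u min_v.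
have [m [min_m th_m le_m]] := exists_class_min (Th_congr (p + q)) (pprod u v).
have xbar_m : xbar m = m.
  by apply: xbar_id => a b /(weak_leP _ _ le_m) /inv_pprod_same_block.
move: th_m; rewrite -xbar_m => /Th_transl [th_u th_v].
have le_uv_m : weak_le (pprod u v) m.
  rewrite -xbar_m; apply: pprod_le.
    exact/min_u/(lcongr_sym (Th_congr p)).
  exact/min_v/(lcongr_sym (Th_congr q)).
by rewrite (weak_le_anti le_uv_m le_m).
Qed.

Lemma xbar_congr m y : Th _ m y -> weak_le m y -> Th _ (xbar m) (xbar y).
Proof.
move=> th_my le_my.
exact: (lcongr_meet (Th_congr _) th_my (xbar_is_meet le_my) (xbar_is_meet (weak_le_refl y))).
Qed.

(* Let w be the minimum of the class of xbar m.  Putting all high values first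
   is a join with a fixed permutation, so it maps w and xbar m to congruent permutations t_w and t_m.
   Meeting with m, which lies below t_m, shows m <= t_w; restricted to pairs
   in the same block, this says xbar m <= w. *)
Lemma xbar_class_min m : class_min (Th _) m -> class_min (Th _) (xbar m).
Proof.
move=> min_m; have congr := Th_congr (p + q).
have [w [min_w th_w le_w]] := exists_class_min congr (xbar m).
have [tw inv_tw] := exists_high_first w.
have [tm inv_tm] := exists_high_first (xbar m).
have [t0 inv_t0] := exists_high_first (1%g : 'S_(p + q)).
have th_t : Th _ tw tm.
  by apply: (lcongr_join congr (lcongr_sym congr th_w)); apply: high_first_is_join inv_t0.
have le_m_tm : weak_le m tm.
  apply/weak_leP => a b inv_m; rewrite inv_tm inv_xbar inv_m andbT.
  by case: (same_block a b); rewrite //= andbT; case/andP: inv_m.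
have [z meet_z] := meet_exists tw m.
have th_zm : Th _ z m.
  by apply: (lcongr_meet congr th_t meet_z); rewrite is_meetC weak_le_is_meet.
have le_m_tw : weak_le m tw.
  have -> : m = z by apply: weak_le_anti; [apply: min_m | case/and3P: meet_z].
  by case/and3P: meet_z.
suff -> : xbar m = w by [].
apply: weak_le_anti => //; apply/weak_leP => a b; rewrite inv_xbar => /andP [same inv_m].
by move: (weak_leP _ _ le_m_tw _ _ inv_m); rewrite inv_tw same /= andbF orbF.
Qed.

Lemma xbar_class_minE u v m y :
  class_min (Th p) u -> class_min (Th q) v -> class_min (Th _) m ->
  Th _ y m -> weak_le m y ->
  (xbar m == pprod u v) = Th _ (xbar y) (pprod u v).
Proof.
move=> min_u min_v min_m th_ym le_my; have congr := Th_congr (p + q).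
have th_xbar := xbar_congr (lcongr_sym congr th_ym) le_my.
apply/eqP/idP => [<-|th_y_uv]; first exact: lcongr_sym.
apply: (class_min_uniq congr (xbar_class_min min_m) (pprod_class_min min_u min_v)).
exact: lcongr_trans th_xbar th_y_uv.
Qed.

End TranslationalFamily.

Section ClassSumMap.
Variables (K : fieldType) (Th : forall n, rel 'S_n).
Arguments Th : clear implicits.
Hypothesis Th_congr : forall n, lattice_congruence (Th n).
Local Open Scope ring_scope.

Lemma ZsetP n (x : 'S_n) : reflect (class_min (Th n) x) (x \in Zset Th n).
Proof.
rewrite inE; apply: (iffP forallP) => [min_x y|min_x y]; last exact/implyP/min_x.
by move/implyP: (min_x y); apply.
Qed.

Lemma cmap_class_min n (f : {ffun 'S_n -> K}) y m :
  m \in Zset Th n -> Th n y m -> cmap Th f y = f m.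
Proof.
move=> Zm th_ym; rewrite ffunE (bigD1 m) //= th_ym mulr1 big1 ?addr0 // => x /andP [Zx neq_xm].
case th_yx: (Th n y x); rewrite ?mulr0 //; case/eqP: neq_xm.
apply: (class_min_uniq (Th_congr n)); [exact/ZsetP | exact/ZsetP |].
exact: (lcongr_trans (Th_congr n) (lcongr_sym (Th_congr n) th_yx) th_ym).
Qed.

Lemma cmap_basis n (w y : 'S_n) : w \in Zset Th n -> cmap Th (basis K w) y = (Th n y w)%:R.
Proof.
move=> Zw; rewrite ffunE (bigD1 w) //= ffunE eqxx mul1r big1 ?addr0 // => x /andP [_ neq_xw].
by rewrite ffunE (negbTE neq_xw) mul0r.
Qed.

Lemma mulSE p q (f : {ffun 'S_p -> K}) (g : {ffun 'S_q -> K}) x :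
  mulS f g x = f (std_low x) * g (std_high x).
Proof.
rewrite ffunE (bigD1 (std_low x)) //= (bigD1 (std_high x)) //= xbar_eqE !eqxx mulr1.
rewrite big1 ?addr0 => [|v neq_v]; last by rewrite xbar_eqE eqxx (negbTE neq_v) mulr0.
rewrite big1 ?addr0 // => u neq_u; apply: big1 => v _.
by rewrite xbar_eqE (negbTE neq_u) mulr0.
Qed.

Lemma cmap_mulZ p q (u : 'S_p) (v : 'S_q) : translational Th ->
  u \in Zset Th p -> v \in Zset Th q ->
  cmap Th (mulZ K Th u v) = mulS (cmap Th (basis K u)) (cmap Th (basis K v)).
Proof.
move=> Th_transl Zu Zv; apply/ffunP => y.
have [m [min_m th_ym le_my]] := exists_class_min (Th_congr (p + q)) y.
have Zm : m \in Zset Th (p + q) by apply/ZsetP.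
rewrite (cmap_class_min _ Zm th_ym) mulSE !cmap_basis // ffunE Zm xbar_eqE -eq_pprod eq_sym.
move/ZsetP: Zu => min_u; move/ZsetP: Zv => min_v.
rewrite (xbar_class_minE Th_congr Th_transl min_u min_v min_m th_ym le_my).
have -> : Th _ (xbar y) (pprod u v) = Th p (std_low y) u && Th q (std_high y) v.
  by apply/idP/andP => /Th_transl.
by rewrite -natrM mulnb.
Qed.

Lemma cmap_basis1 : cmap Th (basis K (1%g : 'S_0)) = basis K 1%g.
Proof.
have S0_trivial (x : 'S_0) : x = 1%g by apply/permP => [[]].
have Z1 : (1%g : 'S_0) \in Zset Th 0 by apply/ZsetP => x _; apply/weak_leP => [[]].
apply/ffunP => y; rewrite (cmap_class_min _ Z1) ?(S0_trivial y) //.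
exact: lcongr_refl.
Qed.

Lemma cmap_inj n (f g : {ffun 'S_n -> K}) :
  (forall x, x \notin Zset Th n -> f x = 0) -> (forall x, x \notin Zset Th n -> g x = 0) ->
  cmap Th f = cmap Th g -> f = g.
Proof.
move=> f_supp g_supp /ffunP eq_fg; apply/ffunP => x.
have [Zx|nZx] := boolP (x \in Zset Th n); last by rewrite f_supp ?g_supp.
have th_xx := lcongr_refl (Th_congr n) x.
by move: (eq_fg x); rewrite !(cmap_class_min _ Zx th_xx).
Qed.

End ClassSumMap.

Local Open Scope ring_scope.

Theorem theorem1p2 (K : fieldType) (Th : forall n, rel 'S_n) :
  (forall n, lattice_congruence (Th n)) ->
  translational Th ->
  (* multiplicativity on basis elements *)
  (forall p q (u : 'S_p) (v : 'S_q),
     u \in Zset Th p -> v \in Zset Th q ->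
     cmap Th (mulZ K Th u v) = mulS (cmap Th (basis K u)) (cmap Th (basis K v)))
  (* unit preserved: the unit is the empty permutation in S_0 *)
  /\ cmap Th (basis K (1%g : 'S_0)) = basis K (1%g : 'S_0)
  (* injectivity on each graded piece K[Z_n] *)
  /\ (forall n (f g : {ffun 'S_n -> K}),
        (forall x, x \notin Zset Th n -> f x = 0) ->
        (forall x, x \notin Zset Th n -> g x = 0) ->
        cmap Th f = cmap Th g -> f = g).
Proof.
move=> Th_congr Th_transl; split; [|split].
- by move=> p q u v; apply: cmap_mulZ.
- exact: cmap_basis1.
- exact: cmap_inj.
Qed.
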